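(* Let $\Sigma=(\{x_1,x_2\},\{F_1,F_2\})$ be an LP seed of rank $2$ with $\hat F_1=F_1$ and $\hat F_2=F_2$, and let $x'_2=F_2/x_2$. Then $$R[x_1,x_2^{\pm1}]\cap R[x_1^{\pm1},x_2,x'_2]=R[x_1,x_2,x'_2].$$
   Context: $R$ is a unique factorization domain containing $\mathbb{Z}$ and $\mathcal{F}$ is the field of rational functions in $2$ variables over $\mathrm{Frac}(R)$. An LP seed of rank $2$ is a pair $(\{x_1,x_2\},\{F_1,F_2\})$ where $\{x_1,x_2\}$ is a transcendence basis of $\mathcal{F}$ over $\mathrm{Frac}(R)$ and $F_1,F_2$ are irreducible polynomials in $R[x_1,x_2]$, neither divisible by $x_1$ or $x_2$, with $F_1$ not involving $x_1$ and $F_2$ not involving $x_2$. The exchange Laurent polynomial is $\hat F_j=F_j/x_k^{a}$ ($\{j,k\}=\{1,2\}$), with $a\in\mathbb{Z}_{\ge0}$ maximal such that $F_k^{a}$ divides $F_j|_{x_k\leftarrow F_k/x'_k}$ in $R[(x'_k)^{-1}]$ (for $F_j$ regarded in the remaining variables). All rings are subrings of $\mathcal{F}$. *)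

From HB Require Import structures.
From mathcomp Require Import all_boot all_order all_algebra.
From mathcomp Require Import fraction.
Set Implicit Arguments. Unset Strict Implicit. Unset Printing Implicit Defensive.
Import Order.TTheory GRing.Theory Num.Theory.
Local Open Scope ring_scope.

Definition rdvd (S : comPzRingType) (a b : S) : Prop := exists c : S, b = c * a.

Definition irreducible_el (S : comUnitRingType) (x : S) : Prop :=
  [/\ x != 0, x \isn't a GRing.unit &
      forall a b : S, x = a * b -> a \is a GRing.unit \/ b \is a GRing.unit].

Definition prime_el (S : comUnitRingType) (x : S) : Prop :=
  [/\ x != 0, x \isn't a GRing.unit &
      forall a b : S, rdvd x (a * b) -> rdvd x a \/ rdvd x b].

Definition is_UFD (R : idomainType) : Prop :=
  (forall x : R, x != 0 -> x \isn't a GRing.unit ->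
     exists s : seq R, (forall p, p \in s -> irreducible_el p) /\ x = \prod_(p <- s) p)
  /\ (forall p : R, irreducible_el p -> prime_el p).

Definition contains_Z (R : idomainType) : Prop := forall n : int, n%:~R = 0 :> R -> n = 0.

Section Ambient.
Variable R : idomainType.
Definition FracR := {fraction R}.
Definition Ffield := {fraction {poly {poly FracR}}}.

Definition iK (k : FracR) : Ffield := tofrac (polyC (polyC k)).
Definition iR (r : R) : Ffield := iK (tofrac r).

(* evaluation of P = sum_j q_j(X1) X2^j at (a, b) with coefficient map f *)
Definition eval2 (S : nzRingType) (f : S -> Ffield) (P : {poly {poly S}}) (a b : Ffield)
  : Ffield := (map_poly (fun q : {poly S} => (map_poly f q).[a]) P).[b].

Inductive subalg (S : nzRingType) (f : S -> Ffield) (gens : seq Ffield) : Ffield -> Prop :=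
  | subalg_coef s : subalg f gens (f s)
  | subalg_gen g : g \in gens -> subalg f gens g
  | subalg_add u v : subalg f gens u -> subalg f gens v -> subalg f gens (u + v)
  | subalg_mul u v : subalg f gens u -> subalg f gens v -> subalg f gens (u * v).

Definition transc_basis (x1 x2 : Ffield) : Prop :=
  (forall P : {poly {poly FracR}}, eval2 iK P x1 x2 = 0 -> P = 0)
  /\ (forall z : Ffield, exists p : {poly Ffield},
        [/\ p != 0, forall i, subalg iK [:: x1; x2] p`_i & root p z]).
End Ambient.

(* ---------- polynomials in R[x1, x2] ----------
   P : {poly {poly R}} represents sum_j P_j(x1) x2^j
   (inner variable = x1, outer variable = x2). *)
Section Polys.
Variable R : idomainType.
Definition X1 : {poly {poly R}} := ('X)%:P.
Definition X2 : {poly {poly R}} := 'X.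
Definition not_involving_x1 (P : {poly {poly R}}) : Prop := forall j : nat, (size (nth 0%R (P : seq _) j) <= 1)%N.
Definition not_involving_x2 (P : {poly {poly R}}) : Prop := (size P <= 1)%N.
(* F1 in R[x2] seen as a univariate polynomial in x2 *)
Definition as_poly_x2 (P : {poly {poly R}}) : {poly R} := \poly_(j < size P) (P`_j)`_0.
(* F2 in R[x1] seen as a univariate polynomial in x1 *)
Definition as_poly_x1 (P : {poly {poly R}}) : {poly R} := P`_0.

(* For F_j in R[x_l] (l the remaining variable) and
   F_k in R[x_l], the substitution x_k <- F_k / x'_k turns F_j (a polynomial
   in x_k) into an element of R[x_l][y], y = (x'_k)^{-1}:
     sub = F_j(F_k * y).
   exch_exp fj fk a  <->  a is the maximal natural number such that
   F_k^a divides sub in R[x_l, y]. *)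
Definition exch_sub (fj fk : {poly R}) : {poly {poly R}} :=
  (map_poly (fun c : R => (c%:P)%:P) fj).[fk%:P * 'X].
Definition exch_exp (fj fk : {poly R}) (a : nat) : Prop :=
  rdvd (fk%:P ^+ a) (exch_sub fj fk)
  /\ forall b : nat, rdvd (fk%:P ^+ b) (exch_sub fj fk) -> (b <= a)%N.
End Polys.

Definition LP_seed (R : idomainType) (x1 x2 : Ffield R) (F1 F2 : {poly {poly R}}) : Prop :=
  [/\ transc_basis x1 x2,
      irreducible_el F1 /\ irreducible_el F2,
      ~ rdvd (X1 R) F1 /\ ~ rdvd (X2 R) F1,
      ~ rdvd (X1 R) F2 /\ ~ rdvd (X2 R) F2 &
      not_involving_x1 F1 /\ not_involving_x2 F2].

From HB Require Import structures.
From mathcomp Require Import all_boot all_order all_algebra fraction.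
From mathcomp Require Import zify ring.
Set Implicit Arguments. Unset Strict Implicit. Unset Printing Implicit Defensive.
Import GRing.Theory.
Local Open Scope ring_scope.

(* Since F2 does not involve x2 it is a polynomial c(x1), and x1 not dividing F2 means c(0) != 0,
   i.e. x1 and c are coprime.  As x2' = c/x2, clearing denominators shows that R[x1, x2, x2']
   consists of the u with x2^M u = sum_i P_i(x1) x2^i where c^(M-i) divides P_i.  An element z
   of the intersection is a Laurent polynomial in x2 with x1^N z in R[x1, x2, x2'] for some N;
   by algebraic independence of x1, x2 one may compare coefficients, and since x1 is coprime to
   c the divisibility conditions for x1 w pass to w, so the powers of x1 peel off one by one.
   Nothing else is needed. *)

Section Subalgebra.
Variables (R : idomainType) (S : nzRingType) (f : {rmorphism S -> Ffield R}).
Implicit Types (gens : seq (Ffield R)) (u : Ffield R).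

Lemma subalg0 gens : subalg f gens 0.
Proof. by rewrite -(rmorph0 f); apply: subalg_coef. Qed.

Lemma subalg1 gens : subalg f gens 1.
Proof. by rewrite -(rmorph1 f); apply: subalg_coef. Qed.

Lemma subalgX gens u k : subalg f gens u -> subalg f gens (u ^+ k).
Proof.
move=> hu; elim: k => [|k ih]; first by rewrite expr0; apply: subalg1.
by rewrite exprS; apply: subalg_mul.
Qed.

Lemma subalg_sum gens n (F : 'I_n -> Ffield R) :
  (forall i, subalg f gens (F i)) -> subalg f gens (\sum_(i < n) F i).
Proof.
move=> hF; apply: (big_ind (subalg f gens)) => //; first exact: subalg0.
exact: subalg_add.
Qed.

Lemma subalg_trans gens gens' u :
  (forall g, g \in gens -> subalg f gens' g) -> subalg f gens u -> subalg f gens' u.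
Proof.
move=> hgens; elim=> [s|g /hgens //|a b _ ha _ hb|a b _ ha _ hb].
- exact: subalg_coef.
- exact: subalg_add.
- exact: subalg_mul.
Qed.

End Subalgebra.

Section Divisibility.
Variable S : comPzRingType.
Implicit Types (c d e p q : S).

Lemma rdvd0 d : rdvd d 0.
Proof. by exists 0; rewrite mul0r. Qed.

Lemma rdvd1 p : rdvd 1 p.
Proof. by exists p; rewrite mulr1. Qed.

Lemma rdvdD d p q : rdvd d p -> rdvd d q -> rdvd d (p + q).
Proof. by move=> [a ->] [b ->]; exists (a + b); rewrite mulrDl. Qed.

Lemma rdvd_sum d n (F : 'I_n -> S) :
  (forall i, rdvd d (F i)) -> rdvd d (\sum_(i < n) F i).
Proof.
move=> hF; apply: (big_ind (rdvd d)) => //; [exact: rdvd0 | exact: rdvdD].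
Qed.

Lemma rdvdM d e p q : rdvd d p -> rdvd e q -> rdvd (d * e) (p * q).
Proof. by move=> [a ->] [b ->]; exists (a * b); rewrite mulrACA. Qed.

Lemma rdvd_trans d e p : rdvd d e -> rdvd e p -> rdvd d p.
Proof. by move=> [a ->] [b ->]; exists (b * a); rewrite mulrA. Qed.

Lemma rdvd_exp_le c m n p : (n <= m)%N -> rdvd (c ^+ m) p -> rdvd (c ^+ n) p.
Proof. by move=> lenm; apply: rdvd_trans; exists (c ^+ (m - n)); rewrite -exprD subnK. Qed.

End Divisibility.

Lemma rdvd_mulXr (R : idomainType) (d q : {poly R}) :
  d.[0] != 0 -> rdvd d ('X * q) -> rdvd d q.
Proof.
move=> hd0 [k hk].
have : root k 0.
  move/(congr1 (horner^~ 0)): hk; rewrite !hornerM hornerX mul0r => /esym/eqP.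
  by rewrite mulf_eq0 (negbTE hd0) orbF.
case/factor_theorem => k' hk'; exists k'.
apply: (@mulfI _ 'X); first by rewrite polyX_eq0.
by rewrite hk hk' subr0 mulrA (mulrC 'X).
Qed.

Lemma rdvd_X1_polyC (R : idomainType) (q : {poly R}) : root q 0 -> rdvd (X1 R) q%:P.
Proof. by case/factor_theorem => k ->; exists k%:P; rewrite subr0 polyCM. Qed.

HB.instance Definition _ (R : idomainType) := GRing.RMorphism.copy (@iR R)
  ((@tofrac _) \o polyC \o polyC \o (@tofrac R)).

Definition evalR (R : idomainType) (x1 x2 : Ffield R) :
  {rmorphism {poly {poly R}} -> Ffield R} :=
  horner_eval x2 \o map_poly (horner_eval x1 \o map_poly (@iR R)).

Section Evaluation.
Variables (R : idomainType) (x1 x2 : Ffield R).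
Local Notation ev := (evalR x1 x2).

Lemma evalRE P : ev P = eval2 (@iR R) P x1 x2.
Proof. by []. Qed.

Lemma evalR_X1 : ev ('X%:P) = x1.
Proof. by rewrite /= map_polyC /= !horner_evalE hornerC map_polyX hornerX. Qed.

Lemma evalR_X2 : ev 'X = x2.
Proof. by rewrite /= map_polyX horner_evalE hornerX. Qed.

Lemma evalR_C r : ev r%:P%:P = iR r.
Proof. by rewrite /= map_polyC /= !horner_evalE hornerC map_polyC hornerC. Qed.

Lemma evalR_expand P : ev P = \sum_(i < size P) ev (P`_i)%:P * x2 ^+ i.
Proof.
rewrite -{1}[P]coefK poly_def rmorph_sum; apply: eq_bigr => i _.
by rewrite -mul_polyC rmorphM rmorphXn evalR_X2.
Qed.

Lemma evalR_tofrac P : ev P = eval2 (@iK R) (map_poly (map_poly (@tofrac R)) P) x1 x2.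
Proof.
rewrite evalRE /eval2 -map_poly_comp_id0; last by rewrite map_poly0 horner0.
apply: (congr1 (horner^~ x2)); apply: eq_map_poly => q /=.
rewrite -map_poly_comp_id0; last by rewrite /iK polyC0 tofrac0.
by apply: (congr1 (horner^~ x1)); apply: eq_map_poly.
Qed.

Lemma evalR_inj : transc_basis x1 x2 -> injective ev.
Proof.
move=> [halg _].
have tofrac_inj : injective (@tofrac R) by move=> a b /eqP; rewrite tofrac_eq => /eqP.
have map_inj : injective (map_poly (@tofrac R)) := map_inj_poly tofrac_inj (rmorph0 _).
have ev_eq0 P : ev P = 0 -> P = 0.
  rewrite evalR_tofrac => /halg; rewrite -(map_poly0 (map_poly (@tofrac R))).
  exact: (map_inj_poly map_inj (map_poly0 _)).
move=> P Q hPQ; apply/eqP; rewrite -subr_eq0; apply/eqP/ev_eq0.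
by rewrite rmorphB hPQ subrr.
Qed.

Lemma transc_basis_neq0 : transc_basis x1 x2 -> x1 != 0 /\ x2 != 0.
Proof.
move/evalR_inj => ev_inj; split; apply/eqP => hx.
  have := ev_inj ('X%:P) 0; rewrite rmorph0 evalR_X1 => /(_ hx) /eqP.
  by rewrite polyC_eq0 polyX_eq0.
have := ev_inj 'X 0; rewrite rmorph0 evalR_X2 => /(_ hx) /eqP.
by rewrite polyX_eq0.
Qed.

Lemma evalR_polyC_subalg gens (q : {poly R}) :
  x1 \in gens -> subalg (@iR R) gens (ev q%:P).
Proof.
move=> hx1; elim/poly_ind: q => [|q a ih]; first by rewrite rmorph0; apply: subalg0.
rewrite polyCD polyCM !rmorphD rmorphM evalR_X1 evalR_C.
by apply: subalg_add; [apply: subalg_mul => //; apply: subalg_gen | apply: subalg_coef].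
Qed.

End Evaluation.

Section Mutation.
Variables (R : idomainType) (x1 x2 : Ffield R) (c : {poly R}).
Hypothesis x2_neq0 : x2 != 0.
Local Notation ev := (evalR x1 x2).
Local Notation subalg := (subalg (@iR R)).

Definition x2_mutation := ev c%:P / x2.
Definition Sgens := [:: x1; x2; x2_mutation].
Definition Tgens := [:: x1; x2; x2^-1].
Definition Ugens := [:: x1^-1; x1; x2; x2_mutation].

Lemma x2_cleared_shift u M P k : u * x2 ^+ M = ev P -> u * x2 ^+ (M + k) = ev (P * 'X^k).
Proof. by move=> hu; rewrite exprD mulrA hu rmorphM rmorphXn evalR_X2. Qed.

(* Since x2_mutation ^+ k = c ^+ k / x2 ^+ k, these are exactly the elements of R[x1, x2, x2_mutation]. *)
Definition cleared_form M P u := u * x2 ^+ M = ev P /\ forall i, rdvd (c ^+ (M - i)) P`_i.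
Definition has_cleared_form u := exists M P, cleared_form M P u.

Lemma cleared_form_shift M P u k : cleared_form M P u -> cleared_form (M + k) (P * 'X^k) u.
Proof.
move=> [hu hP]; split; first exact: x2_cleared_shift.
move=> i; rewrite coefMXn; case: ltnP => hik; first exact: rdvd0.
by apply: rdvd_exp_le (hP _); lia.
Qed.

Lemma has_cleared_formD u v : has_cleared_form u -> has_cleared_form v -> has_cleared_form (u + v).
Proof.
move=> [M [P hP]] [N [Q hQ]].
have [hu {}hP] := cleared_form_shift N hP; have [hv {}hQ] := cleared_form_shift M hQ.
exists (M + N)%N, (P * 'X^N + Q * 'X^M); split.
  by rewrite mulrDl hu rmorphD (addnC M N) hv.
by move=> i; rewrite coefD; apply: rdvdD; [|rewrite addnC].
Qed.

Lemma has_cleared_formM u v : has_cleared_form u -> has_cleared_form v -> has_cleared_form (u * v).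
Proof.
move=> [M [P [hu hP]]] [N [Q [hv hQ]]].
exists (M + N)%N, (P * Q); split; first by rewrite rmorphM -hu -hv exprD mulrACA.
move=> i; rewrite coefM; apply: rdvd_sum => j.
apply: (@rdvd_exp_le _ _ (M - j + (N - (i - j)))); first by have := ltn_ord j; lia.
by rewrite exprD; apply: rdvdM.
Qed.

Lemma subalg_has_cleared_form u : subalg Sgens u -> has_cleared_form u.
Proof.
have cleared0 v P : v = ev P -> has_cleared_form v.
  move=> ->; exists 0%N, P; split=> [|i]; first by rewrite expr0 mulr1.
  by rewrite sub0n expr0; apply: rdvd1.
elim=> [s|g|a b _ ha _ hb|a b _ ha _ hb].
- by apply: (cleared0 _ s%:P%:P); rewrite evalR_C.
- rewrite !inE => /or3P[/eqP->|/eqP->|/eqP->].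
  + by apply: (cleared0 _ 'X%:P); rewrite evalR_X1.
  + by apply: (cleared0 _ 'X); rewrite evalR_X2.
  + exists 1%N, c%:P; split=> [|i]; first by rewrite expr1 divfK.
    rewrite coefC; case: eqP => [->|_]; last exact: rdvd0.
    by exists 1; rewrite mul1r.
- exact: has_cleared_formD.
- exact: has_cleared_formM.
Qed.

Lemma cleared_term_subalg q M i :
  subalg Sgens (ev (q * c ^+ (M - i))%:P * x2 ^+ i / x2 ^+ M).
Proof.
have x1S : x1 \in Sgens by rewrite !inE eqxx.
have x2S : x2 \in Sgens by rewrite !inE eqxx orbT.
have x2'S : x2_mutation \in Sgens by rewrite !inE eqxx !orbT.
rewrite polyCM rmorphM (rmorphXn polyC) rmorphXn -!mulrA.
apply: subalg_mul; first exact: evalR_polyC_subalg x1S.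
case: (leqP M i) => hMi.
  rewrite (eqP hMi) expr0 mul1r -{1}(subnK hMi) exprD mulfK ?expf_neq0 //.
  exact/subalgX/subalg_gen/x2S.
have := subnKC (ltnW hMi); move: (M - i)%N => k <-.
rewrite exprD invfM mulVKf ?expf_neq0 // -expr_div_n.
exact/subalgX/subalg_gen/x2'S.
Qed.

Lemma has_cleared_form_subalg u : has_cleared_form u -> subalg Sgens u.
Proof.
move=> [M [P [hu hP]]].
have -> : u = ev P / x2 ^+ M by rewrite -hu mulfK ?expf_neq0.
rewrite evalR_expand mulr_suml; apply: subalg_sum => i.
have [q ->] := hP i; exact: cleared_term_subalg.
Qed.

Lemma subalg_Tgens_laurent w : subalg Tgens w -> exists M Q, w * x2 ^+ M = ev Q.
Proof.
have laurent0 v P : v = ev P -> exists M Q, v * x2 ^+ M = ev Q.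
  by move=> ->; exists 0%N, P; rewrite expr0 mulr1.
elim=> [s|g|a b _ [M [P ha]] _ [N [Q hb]]|a b _ [M [P ha]] _ [N [Q hb]]].
- by apply: (laurent0 _ s%:P%:P); rewrite evalR_C.
- rewrite !inE => /or3P[/eqP->|/eqP->|/eqP->].
  + by apply: (laurent0 _ 'X%:P); rewrite evalR_X1.
  + by apply: (laurent0 _ 'X); rewrite evalR_X2.
  + by exists 1%N, 1; rewrite expr1 rmorph1 mulVf.
- exists (M + N)%N, (P * 'X^N + Q * 'X^M).
  by rewrite mulrDl (x2_cleared_shift N ha) rmorphD (addnC M N) (x2_cleared_shift M hb).
- exists (M + N)%N, (P * Q).
  by rewrite rmorphM -ha -hb exprD mulrACA.
Qed.

Lemma subalg_Ugens_clear_x1 z : x1 != 0 -> subalg Ugens z -> exists N, subalg Sgens (x1 ^+ N * z).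
Proof.
move=> x1_neq0.
have x1S : x1 \in Sgens by rewrite !inE eqxx.
have sub_Sgens g : g \in Sgens -> exists N, subalg Sgens (x1 ^+ N * g).
  by move=> gS; exists 0%N; rewrite expr0 mul1r; apply: subalg_gen gS.
elim=> [s|g|a b _ [M ha] _ [N hb]|a b _ [M ha] _ [N hb]].
- by exists 0%N; rewrite expr0 mul1r; apply: subalg_coef.
- rewrite !inE => /or4P[/eqP->|/eqP->|/eqP->|/eqP->].
  + by exists 1%N; rewrite expr1 mulfV //; apply: subalg1.
  + by apply: sub_Sgens; rewrite !inE eqxx.
  + by apply: sub_Sgens; rewrite !inE eqxx orbT.
  + by apply: sub_Sgens; rewrite !inE eqxx !orbT.
- exists (M + N)%N.
  have -> : x1 ^+ (M + N) * (a + b) = x1 ^+ N * (x1 ^+ M * a) + x1 ^+ M * (x1 ^+ N * b).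
    by rewrite exprD; ring.
  have x1X k : subalg Sgens (x1 ^+ k) by exact/subalgX/subalg_gen/x1S.
  by apply: subalg_add; apply: subalg_mul.
- exists (M + N)%N.
  by rewrite exprD mulrACA; apply: subalg_mul.
Qed.

(* x1 and c are coprime, so the divisibility conditions of a cleared form survive division by x1. *)
Lemma subalg_Sgens_cancel_x1 w : injective ev -> c.[0] != 0 ->
  (exists K Q, w * x2 ^+ K = ev Q) -> subalg Sgens (x1 * w) -> subalg Sgens w.
Proof.
move=> ev_inj c0 [K [Q hQ]] /subalg_has_cleared_form[M [P /(cleared_form_shift K)[hP dvdP]]].
have hQM := x2_cleared_shift M hQ; rewrite addnC in hQM.
have eP : P * 'X^K = 'X%:P * (Q * 'X^M).
  by apply: ev_inj; rewrite -hP [RHS]rmorphM evalR_X1 -hQM mulrA.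
apply: has_cleared_form_subalg; exists (M + K)%N, (Q * 'X^M); split=> // i.
apply: rdvd_mulXr; first by rewrite horner_exp expf_neq0.
by rewrite -coefCM -eP.
Qed.

Lemma subalg_Tgens_Ugens_Sgens z : injective ev -> c.[0] != 0 -> x1 != 0 ->
  subalg Tgens z -> subalg Ugens z -> subalg Sgens z.
Proof.
move=> ev_inj c0 x1_neq0 zT /(subalg_Ugens_clear_x1 x1_neq0)[N].
have x1T : x1 \in Tgens by rewrite !inE eqxx.
elim: N z zT => [|N ih] z zT; first by rewrite expr0 mul1r.
rewrite exprSr -mulrA => hS.
apply: subalg_Sgens_cancel_x1 => //; first exact: subalg_Tgens_laurent.
exact: ih (subalg_mul (subalg_gen _ x1T) zT) hS.
Qed.

Lemma subalg_Sgens_Tgens z : subalg Sgens z -> subalg Tgens z.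
Proof.
have x1T : x1 \in Tgens by rewrite !inE eqxx.
apply: subalg_trans => g; rewrite !inE => /or3P[/eqP->|/eqP->|/eqP->].
- exact: subalg_gen x1T.
- by apply: subalg_gen; rewrite !inE eqxx orbT.
- apply: subalg_mul; first exact: evalR_polyC_subalg x1T.
  by apply: subalg_gen; rewrite !inE eqxx !orbT.
Qed.

Lemma subalg_Sgens_Ugens z : subalg Sgens z -> subalg Ugens z.
Proof.
apply: subalg_trans => g; rewrite !inE => /or3P[/eqP->|/eqP->|/eqP->]; apply: subalg_gen.
- by rewrite !inE eqxx orbT.
- by rewrite !inE eqxx !orbT.
- by rewrite !inE eqxx !orbT.
Qed.

End Mutation.

Theorem lemma4p4 (R : idomainType) (hUFD : is_UFD R) (hZ : contains_Z R)
  (x1 x2 : Ffield R) (F1 F2 : {poly {poly R}})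
  (hseed : LP_seed x1 x2 F1 F2)
  (* \hat F_1 = F_1 : the exchange exponent of F_1 (w.r.t. x_2 <- F_2/x'_2) is 0 *)
  (hF1 : exch_exp (as_poly_x2 F1) (as_poly_x1 F2) 0)
  (* \hat F_2 = F_2 : the exchange exponent of F_2 (w.r.t. x_1 <- F_1/x'_1) is 0 *)
  (hF2 : exch_exp (as_poly_x1 F2) (as_poly_x2 F1) 0) :
  let x2' := eval2 (@iR R) F2 x1 x2 / x2 in
  forall z : Ffield R,
    (subalg (@iR R) [:: x1; x2; x2^-1] z /\ subalg (@iR R) [:: x1^-1; x1; x2; x2'] z)
    <-> subalg (@iR R) [:: x1; x2; x2'] z.
Proof.
case: hseed => hbasis _ _ [X1_ndvd_F2 _] [_ /size1_polyC eF2].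
have [x1_neq0 x2_neq0] := transc_basis_neq0 hbasis.
move: (F2`_0) eF2 X1_ndvd_F2 => c -> X1_ndvd_c x2' z.
have c0 : c.[0] != 0 by apply/negP => /rdvd_X1_polyC.
change (subalg (@iR R) (Tgens x1 x2) z /\ subalg (@iR R) (Ugens x1 x2 c) z
  <-> subalg (@iR R) (Sgens x1 x2 c) z).
split=> [[zT zU] | zS].
  apply: (subalg_Tgens_Ugens_Sgens x2_neq0 _ _ x1_neq0 zT zU).
    exact: (evalR_inj hbasis).
  exact: c0.
split; [exact: subalg_Sgens_Tgens zS | exact: subalg_Sgens_Ugens zS].
Qed.
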